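(* Consider any instance of the rescheduling problem $(1, h_1 \mid \Delta_{\max}\le k \mid \mu\Delta_{\max} + \sum_{j=1}^n w_j C_j)$ described in the context, and suppose it admits at least one feasible schedule. Then there exists an optimal schedule $\sigma^*$ such that (a) the jobs in the earlier schedule of $\sigma^*$ are processed in increasing order of their indices (i.e., in the same order as in $\pi^*$); and (b) the jobs in the later schedule of $\sigma^*$ are also processed in increasing order of their indices.
   Context: An instance consists of $n$ jobs $J_1,\dots,J_n$, where $J_j$ has a positive integer processing time $p_j$ and a positive integer weight $w_j$, indexed in WSPT order $p_1/w_1\le p_2/w_2\le\cdots\le p_n/w_n$; integers $T_1,T_2$ with $0\le T_1<T_2$ (the machine is unavailable during $[T_1,T_2]$); an integer $k$; and a rational $\mu\ge 0$. The original schedule $\pi^*$ processes $J_1,\dots,J_n$ in this order consecutively from time $0$ without idle time, so $S_j(\pi^* )=\sum_{i<j}p_i$ and $C_j(\pi^* )=\sum_{i\le j}p_i$. A schedule $\sigma$ assigns each job a start time $S_j(\sigma)\ge 0$; jobs are processed non-preemptively on a single machine, $C_j(\sigma)=S_j(\sigma)+p_j$, no two jobs overlap in time, and no job is processed inside the unavailability interval (each job has $C_j(\sigma)\le T_1$ or $S_j(\sigma)\ge T_2$). Let $\Delta_j=|C_j(\sigma)-C_j(\pi^* )|$ and $\Delta_{\max}=\max_j\Delta_j$. A schedule is feasible if $\Delta_{\max}\le k$; an optimal schedule is a feasible schedule minimizing $\mu\Delta_{\max}+\sum_{j=1}^n w_jC_j(\sigma)$. The earlier schedule of $\sigma$ consists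 of the jobs with $C_j(\sigma)\le T_1$; the later schedule consists of the jobs completed after $T_2$. Standing assumptions: some job has $C_j(\pi^* )>T_1$; letting $j_1$ be the smallest such index, $p_{\min}\le T_1<P$ and $T_2-S_{j_1}(\pi^* )\le k$, where $p_{\min}=\min_j p_j$ and $P=\sum_j p_j$. *)

From mathcomp Require Import all_boot all_order all_algebra.
Set Implicit Arguments. Unset Strict Implicit. Unset Printing Implicit Defensive.
Import Order.TTheory GRing.Theory Num.Theory.
Local Open Scope ring_scope.

Section Resched.
Variables (n : nat) (p w : 'I_n -> nat) (T1 T2 k : nat) (mu : rat).

(* original schedule pi*: jobs in index order from time 0 *)
Definition S_orig (j : 'I_n) : nat := \sum_(i < n | (i < j)%N) p i.
Definition C_orig (j : 'I_n) : nat := \sum_(i < n | (i <= j)%N) p i.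
Definition Ptot : nat := \sum_(i < n) p i.
(* minimum processing time; seed Ptot is harmless since n > 0 is forced by T1 < Ptot *)
Definition pmin : nat := \big[minn/Ptot]_(i < n) p i.

Definition Cmp (S : 'I_n -> rat) (j : 'I_n) : rat := S j + (p j)%:R.
Definition Delta (S : 'I_n -> rat) (j : 'I_n) : rat := `|Cmp S j - (C_orig j)%:R|.
Definition Dmax (S : 'I_n -> rat) : rat := \big[Num.max/0]_(j < n) Delta S j.

Definition valid_schedule (S : 'I_n -> rat) : Prop :=
  (forall j, 0 <= S j) /\
  (forall i j, i != j -> Cmp S i <= S j \/ Cmp S j <= S i) /\
  (* avoid unavailability interval [T1,T2] *)
  (forall j, Cmp S j <= T1%:R \/ T2%:R <= S j).

Definition feasible (S : 'I_n -> rat) : Prop :=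
  valid_schedule S /\ Dmax S <= k%:R.

Definition cost (S : 'I_n -> rat) : rat :=
  mu * Dmax S + \sum_(j < n) (w j)%:R * Cmp S j.

Definition optimal (S : 'I_n -> rat) : Prop :=
  feasible S /\ forall S', feasible S' -> cost S <= cost S'.

Definition in_earlier (S : 'I_n -> rat) (j : 'I_n) : Prop := Cmp S j <= T1%:R.
Definition in_later (S : 'I_n -> rat) (j : 'I_n) : Prop := T2%:R < Cmp S j.

Definition index_ordered (P : 'I_n -> Prop) (S : 'I_n -> rat) : Prop :=
  forall i j, P i -> P j -> (i < j)%N -> S i < S j.

End Resched.

From mathcomp Require Import all_boot all_order all_algebra.
From mathcomp Require Import zify.
From mathcomp.algebra_tactics Require Import ring lra.
Import Order.TTheory GRing.Theory Num.Theory.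
Local Open Scope ring_scope.

(** Since schedules range over an infinite set, the point is existence.  If two
    jobs of the same part run against index order, pick such a pair at minimal
    distance: no other job runs between them, so starting the lower-indexed job
    first and the other right after it keeps feasibility and [Dmax], and by the
    WSPT order does not increase the weighted completion time.  A schedule free
    of such pairs dominates, job by job, the canonical schedule given by its
    earlier part E and t = Dmax: each part is processed in index order as early
    as possible, from time 0 for E and from T2 for the others, no job starting
    more than t before its original start.  Canonical schedules are feasible
    with index-ordered parts, and cost at most mu t + sum w_j C_j.  The
    constraints on t have half-integral thresholds and each completion time is
    affine in t between integral breakpoints, so t can be rounded to a
    half-integer in [0, k]: the optimum is the best of finitely many canonical
    schedules. *)

Section Rescheduling.
Local Set Implicit Arguments.
Local Unset Strict Implicit.
Variables (n : nat) (p w : 'I_n -> nat) (T1 T2 k : nat) (mu : rat).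
Hypothesis p_gt0 : forall j, (0 < p j)%N.
Hypothesis wspt : forall i j : 'I_n, (i < j)%N -> (p i * w j <= p j * w i)%N.
Hypothesis T1_lt_T2 : (T1 < T2)%N.
Hypothesis mu_ge0 : 0 <= mu.

Local Notation Cmp := (Cmp p).
Local Notation Delta := (Delta p).
Local Notation Dmax := (Dmax p).
Local Notation valid := (valid_schedule p T1 T2).
Local Notation feasible := (feasible p T1 T2 k).
Local Notation cost := (cost p w mu).

Lemma p_pos j : 0 < (p j)%:R :> rat.
Proof. by rewrite ltr0n. Qed.

Lemma T1_ltr_T2 : T1%:R < T2%:R :> rat.
Proof. by rewrite ltr_nat. Qed.

Lemma C_origE j : C_orig p j = (S_orig p j + p j)%N.
Proof.
rewrite /C_orig /S_orig (bigD1 j) //= addnC; congr (_ + _)%N.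
by apply: eq_bigl => l /=; rewrite -val_eqE /= ltn_neqAle andbC.
Qed.

Lemma C_orig_ltn (i j : 'I_n) : (i < j)%N -> (C_orig p i + p j <= C_orig p j)%N.
Proof.
by move=> ij; rewrite [C_orig p j]C_origE leq_add2r; apply: sub_le_big => l /=; lia.
Qed.

Lemma Delta_le S j x :
  (Delta S j <= x) = ((S_orig p j)%:R - x <= S j) && (Cmp S j <= (C_orig p j)%:R + x).
Proof.
rewrite /Delta ler_norml /Cmp C_origE natrD.
by apply/andP/andP => -[? ?]; split; lra.
Qed.

Lemma Delta_le_Dmax S j : Delta S j <= Dmax S.
Proof. exact: (le_bigmax _ _ j). Qed.

Lemma Dmax_ge0 S : 0 <= Dmax S.
Proof. by have /bigmax_leP[] := lexx (Dmax S). Qed.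

Lemma Dmax_le S x : 0 <= x -> (forall j, Delta S j <= x) -> Dmax S <= x.
Proof. by move=> x_ge0 Dx; apply/bigmax_leP; split=> // j _; apply: Dx. Qed.

Definition early (S : 'I_n -> rat) (j : 'I_n) : bool := Cmp S j <= T1%:R.

Lemma late_start S j : valid S -> ~~ early S j -> T2%:R <= S j.
Proof. by move=> [_ [_ avoid]] /negP Ej; case: (avoid j). Qed.

Lemma early_in_window S (a b : rat) x : b <= T1%:R \/ T2%:R <= a ->
  a <= S x -> Cmp S x <= b -> early S x = (b <= T1%:R).
Proof.
rewrite /early /Cmp => side ax xb; have := p_pos x; have := T1_ltr_T2.
by case: side => ? ? ?; apply/idP/idP => ?; lra.
Qed.

(** * Removing inversions by exchanges *)

Definition inversion (S : 'I_n -> rat) (ij : 'I_n * 'I_n) : bool :=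
  [&& (ij.1 < ij.2)%N, S ij.2 < S ij.1 & early S ij.1 == early S ij.2].

Definition inversions S := [set ij | inversion S ij].

Definition window_move S S' (X : pred 'I_n) (a b : rat) : Prop :=
  [/\ forall m, ~~ X m -> S' m = S m,
      forall m, ~~ X m -> Cmp S m <= a \/ b <= S m,
      forall x, X x -> a <= S x /\ Cmp S x <= b,
      forall x, X x -> a <= S' x /\ Cmp S' x <= b &
      b <= T1%:R \/ T2%:R <= a].

Section WindowMove.
Variables (S S' : 'I_n -> rat) (X : pred 'I_n) (a b : rat).
Hypothesis move_SS' : window_move S S' X a b.

Lemma window_early x : early S' x = early S x.
Proof.
have [agree _ inside inside' side] := move_SS'.
have [Xx|nXx] := boolP (X x); last by rewrite /early /Cmp agree.
have [ax xb] := inside x Xx; have [ax' xb'] := inside' x Xx.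
by rewrite (early_in_window side ax xb) (early_in_window side ax' xb').
Qed.

Lemma window_order x m : X x -> ~~ X m ->
  (S' x < S' m) = (S x < S m) /\ (S' m < S' x) = (S m < S x).
Proof.
have [agree outside inside inside' _] := move_SS'.
move=> Xx nXm; rewrite (agree m nXm).
have [ax xb] := inside x Xx; have [ax' xb'] := inside' x Xx.
have := p_pos x; have := p_pos m; move: ax xb ax' xb'; rewrite /Cmp.
by case: (outside m nXm); rewrite /Cmp => ? ? ? ? ? ? ?; split; apply/idP/idP => ?; lra.
Qed.

Lemma window_inversion x y :
  ~~ (X x && X y) -> inversion S' (x, y) -> inversion S (x, y).
Proof.
have [agree _ _ _ _] := move_SS'.
rewrite /inversion /= !window_early => nXxy /and3P[-> lt_yx ->]; rewrite andbT.
have [Xx|nXx] := boolP (X x).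
  have nXy : ~~ X y by move: nXxy; rewrite Xx.
  by have [_ <-] := window_order Xx nXy.
have [Xy|nXy] := boolP (X y); first by have [<- _] := window_order Xy nXx.
by rewrite -(agree x nXx) -(agree y nXy).
Qed.

Lemma window_valid : valid S -> 0 <= a ->
  (forall x y, X x -> X y -> x != y -> Cmp S' x <= S' y \/ Cmp S' y <= S' x) -> valid S'.
Proof.
have [agree outside _ inside' side] := move_SS'.
move=> [S_ge0 [disj avoid]] a_ge0 disjX.
have placed x : X x -> [/\ 0 <= S' x, Cmp S' x <= T1%:R \/ T2%:R <= S' x &
    forall m, ~~ X m -> Cmp S' x <= S' m \/ Cmp S' m <= S' x].
  move=> Xx; have [ax xb] := inside' x Xx; move: xb; rewrite /Cmp => xb.
  split; first lra.
    by case: side => ?; [left|right]; lra.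
  move=> m nXm; rewrite (agree m nXm).
  by case: (outside m nXm); rewrite /Cmp => ?; [right|left]; lra.
split; [|split].
- by move=> x; have [/placed[]|/agree ->] := boolP (X x).
- move=> x y xy; have [Xx|nXx] := boolP (X x); have [Xy|nXy] := boolP (X y).
  + exact: disjX.
  + by have [_ _ /(_ y nXy)] := placed x Xx.
  + by have [_ _ /(_ x nXx) []] := placed y Xy; [right|left].
  + by rewrite /Cmp (agree x nXx) (agree y nXy); apply: disj.
- move=> x; have [/placed[] //|nXx] := boolP (X x).
  by rewrite /Cmp (agree x nXx); apply: avoid.
Qed.

End WindowMove.

Lemma inversion_window S i j : valid S -> inversion S (i, j) ->
  [/\ Cmp S j <= S i, Cmp S i <= T1%:R \/ T2%:R <= S j & early S i = early S j].
Proof.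
move=> VS /and3P[/= ij Sji /eqP Eij]; split=> //.
  have [_ [disj _]] := VS; have ji : j != i by rewrite -val_eqE /= gtn_eqF.
  by case: (disj j i ji) => //; rewrite /Cmp; have := p_pos i; lra.
by case Ei: (early S i); [left | right; apply: late_start => //; rewrite -Eij Ei].
Qed.

(* A job meeting the window would form an inversion of smaller gap with i or j. *)
Lemma min_gap_window S i j : valid S -> inversion S (i, j) ->
    (forall ij, inversion S ij -> S i - S j <= S ij.1 - S ij.2) ->
  forall m, m != i -> m != j -> Cmp S m <= S j \/ Cmp S i <= S m.
Proof.
move=> VS inv_ij gap_min m mi mj; have [_ [disj _]] := VS.
have [ji side Eij] := inversion_window VS inv_ij.
have ij : (i < j)%N by case/and3P: inv_ij.
case: (disj m j mj) => [|jm]; first by left.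
case: (disj m i mi) => [mi'|]; last by right.
exfalso; have pi := p_pos i; have pj := p_pos j; have pm := p_pos m.
have Em : early S m = early S j.
  have Sjm : S j <= S m by move: jm; rewrite /Cmp; lra.
  have mCi : Cmp S m <= Cmp S i by move: mi'; rewrite /Cmp; lra.
  have jCi : Cmp S j <= Cmp S i by move: ji; rewrite /Cmp; lra.
  by rewrite (early_in_window side Sjm mCi) (early_in_window side (lexx _) jCi).
move: ji jm mi'; rewrite /Cmp => ji jm mi'.
case: (ltngtP i m) => [im|mi''|/val_inj im]; last by rewrite im eqxx in mi.
  have /gap_min /= : inversion S (i, m).
    by rewrite /inversion /= im Eij Em eqxx andbT; lra.
  by lra.
have /gap_min /= : inversion S (m, j).
  by rewrite /inversion /= (ltn_trans mi'' ij) Em eqxx andbT; lra.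
by lra.
Qed.

Definition exchange (S : 'I_n -> rat) (i j : 'I_n) (x : 'I_n) : rat :=
  if x == i then S j else if x == j then S j + (p i)%:R else S x.

Section Exchange.
Variables (S : 'I_n -> rat) (i j : 'I_n).
Hypothesis ij : (i < j)%N.
Hypothesis ji_disj : Cmp S j <= S i.

Local Notation S' := (exchange S i j).

Lemma neq_ji : j != i.
Proof. by rewrite -val_eqE /= gtn_eqF. Qed.

Lemma exchange_i : S' i = S j.
Proof. by rewrite /exchange eqxx. Qed.

Lemma exchange_j : S' j = S j + (p i)%:R.
Proof. by rewrite /exchange (negbTE neq_ji) eqxx. Qed.

Lemma exchange_other m : m != i -> m != j -> S' m = S m.
Proof. by move=> mi mj; rewrite /exchange (negbTE mi) (negbTE mj). Qed.

Lemma exchange_Dmax : Dmax S' <= Dmax S.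
Proof.
apply: Dmax_le (Dmax_ge0 S) _ => x.
have CoE m : (C_orig p m)%:R = (S_orig p m)%:R + (p m)%:R :> rat by rewrite C_origE natrD.
have Co : (C_orig p i)%:R + (p j)%:R <= (C_orig p j)%:R :> rat.
  by rewrite -natrD ler_nat C_orig_ltn.
move: (Delta_le_Dmax S i); rewrite Delta_le /Cmp CoE => /andP[i1 i2].
move: (Delta_le_Dmax S j); rewrite Delta_le /Cmp CoE => /andP[j1 j2].
move: ji_disj Co; rewrite /Cmp !CoE => ji' Co'.
have pi := p_pos i; have pj := p_pos j.
have [->|xi] := eqVneq x i; first by rewrite Delta_le /Cmp exchange_i CoE; apply/andP; split; lra.
have [->|xj] := eqVneq x j; first by rewrite Delta_le /Cmp exchange_j CoE; apply/andP; split; lra.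
by rewrite /Delta /Cmp exchange_other //; apply: Delta_le_Dmax.
Qed.

Lemma exchange_cost : cost S' <= cost S.
Proof.
rewrite /cost lerD ?ler_wpM2l ?exchange_Dmax // -subr_ge0 -sumrB.
rewrite (bigD1 i) // (bigD1 j) ?neq_ji //= big1 => [|x /andP[xj xi]]; last first.
  by rewrite /Cmp exchange_other // subrr.
rewrite /Cmp exchange_i exchange_j addr0; move: ji_disj; rewrite /Cmp => ji'.
have wspt_r : (p i)%:R * (w j)%:R <= (p j)%:R * (w i)%:R :> rat.
  by rewrite -!natrM ler_nat wspt.
have : 0 <= (w i)%:R * (S i - S j - (p j)%:R).
  by apply: mulr_ge0; rewrite ?ler0n ?subr_ge0 //; lra.
lra.
Qed.

Hypothesis VS : valid S.
Hypothesis gap : forall m, m != i -> m != j -> Cmp S m <= S j \/ Cmp S i <= S m.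
Hypothesis inv_ij : inversion S (i, j).

Lemma exchange_window : window_move S S' (pred2 i j) (S j) (Cmp S i).
Proof.
have [_ side _] := inversion_window VS inv_ij.
have pi := p_pos i; have pj := p_pos j; move: ji_disj; rewrite /Cmp => ji'.
split=> // [m|m|x|x]; rewrite /= ?negb_or.
- by case/andP; apply: exchange_other.
- by case/andP; apply: gap.
- by case/orP=> /eqP->; rewrite /Cmp; split; lra.
- by case/orP=> /eqP->; rewrite /Cmp ?exchange_i ?exchange_j; split; lra.
Qed.

Lemma exchange_valid : valid S'.
Proof.
apply: (window_valid exchange_window VS); first by have [S_ge0 _] := VS.
move=> x y /orP[] /eqP-> /orP[] /eqP->; rewrite ?eqxx // => _;
  rewrite /Cmp exchange_i exchange_j; [left|right]; lra.
Qed.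

Lemma exchange_inversions : inversions S' \proper inversions S.
Proof.
have pi := p_pos i; rewrite properE; apply/andP; split.
  apply/subsetP => -[x y]; rewrite !inE.
  have [/andP[Xx Xy]|nX] := boolP (pred2 i j x && pred2 i j y); last first.
    exact: (window_inversion exchange_window nX).
  rewrite /inversion /=.
  by case/orP: Xx => /eqP->; case/orP: Xy => /eqP->; rewrite ?ltnn // ltnNge (ltnW ij).
apply/subsetPn; exists (i, j); first by rewrite inE.
by rewrite inE /inversion /= exchange_i exchange_j; apply/negP => /and3P[_ ? _]; lra.
Qed.

End Exchange.

Lemma exchange_step S ij0 : feasible S -> inversion S ij0 ->
  exists S', [/\ feasible S', cost S' <= cost S & (#|inversions S'| < #|inversions S|)%N].
Proof.
move=> [VS Dk] inv0.
case: (arg_minP (fun ij => S ij.1 - S ij.2) inv0) => -[i j] /= inv_ij gap_min.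
have [ji_disj _ _] := inversion_window VS inv_ij.
have ij : (i < j)%N by case/and3P: inv_ij.
have gap := min_gap_window VS inv_ij gap_min.
exists (exchange S i j); split.
- split; first exact: exchange_valid.
  exact: le_trans (exchange_Dmax ij ji_disj) Dk.
- exact: exchange_cost.
- exact/proper_card/exchange_inversions.
Qed.

Lemma exists_inversion_free S : feasible S ->
  exists S1, [/\ feasible S1, cost S1 <= cost S & inversions S1 = set0].
Proof.
move: {2}#|_|.+1 (ltnSn #|inversions S|) => N; elim: N S => // N IH S ltN FS.
have [no_inv|[ij]] := set_0Vmem (inversions S); first by exists S.
rewrite inE => inv; have [S' [FS' cost' lt']] := exchange_step FS inv.
have [S1 [FS1 cost1 no_inv1]] := IH S' (leq_trans lt' (ltnSE ltN)) FS'.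
by exists S1; split=> //; apply: le_trans cost'.
Qed.

Lemma inversion_free_ordered S (i j : 'I_n) : valid S -> inversions S = set0 ->
  (i < j)%N -> early S i = early S j -> Cmp S i <= S j.
Proof.
move=> [_ [disj _]] no_inv ij Eij.
have : (i, j) \notin inversions S by rewrite no_inv inE.
rewrite inE /inversion /= ij Eij eqxx andbT -leNgt => Sij.
have ji : i != j by rewrite -val_eqE /= ltn_eqF.
by case: (disj i j ji) => //; rewrite /Cmp; have := p_pos j; lra.
Qed.

(** * Greedy start times *)

Definition load (Q : pred 'I_n) (m j : 'I_n) : nat :=
  \sum_(l < n | Q l && (m <= l < j)%N) p l.

(* Start time of j when the jobs of Q are processed in index order, each as
   early as possible and job m not before r m. *)
Definition greedy_start (r : 'I_n -> nat) (Q : pred 'I_n) (j : 'I_n) : nat :=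
  \max_(m < n | Q m && (m <= j)%N) (r m + load Q m j).

Section GreedyStart.
Variables (r : 'I_n -> nat) (Q : pred 'I_n).

Lemma load_nil j : load Q j j = 0%N.
Proof. by rewrite /load big_pred0 // => x; case: (Q x) => //=; lia. Qed.

Lemma load_split (m l j : 'I_n) : (m <= l)%N -> (l <= j)%N ->
  load Q m j = (load Q m l + load Q l j)%N.
Proof.
move=> ml lj; rewrite /load (bigID (fun x : 'I_n => (x < l)%N)) /=.
by congr (_ + _)%N; apply: eq_bigl => x; case: (Q x); rewrite /= ?andbF //; lia.
Qed.

Lemma load_ge (m l j : 'I_n) : Q l -> (m <= l < j)%N -> (p l <= load Q m j)%N.
Proof. by move=> Ql mlj; rewrite /load (bigD1 l) /= ?Ql ?mlj // leq_addr. Qed.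

Lemma load_one (m j : 'I_n) : Q m -> (m < j)%N ->
  (forall l : 'I_n, Q l && (m < l < j)%N = false) -> load Q m j = p m.
Proof.
move=> Qm mj none; rewrite /load (big_pred1 m) // => x /=.
have [->|xm] := eqVneq x m; first by rewrite Qm leqnn mj.
have mx : (nat_of_ord m != x) by rewrite eq_sym.
by have := none x; rewrite ltn_neqAle mx.
Qed.

Lemma greedy_start_witness j : Q j ->
  exists2 m : 'I_n, Q m && (m <= j)%N & greedy_start r Q j = (r m + load Q m j)%N.
Proof.
move=> Qj; pose P m := Q m && (m <= j)%N; pose F m := (r m + load Q m j)%N.
have Pj : P j by rewrite /P Qj leqnn.
rewrite /greedy_start (bigmax_eq_arg _ j _ _ Pj) //.
by case: (@arg_maxP _ _ _ j P F Pj) => m Pm _; exists m.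
Qed.

Lemma greedy_start_ge j : Q j -> (r j <= greedy_start r Q j)%N.
Proof.
move=> Qj; rewrite /greedy_start; apply: (bigop.bigmax_sup j).
  by rewrite Qj leqnn.
by rewrite load_nil addn0.
Qed.

Lemma greedy_start_mono (i j : 'I_n) : (i < j)%N -> Q i ->
  (greedy_start r Q i + p i <= greedy_start r Q j)%N.
Proof.
move=> ij Qi; have [m /andP[Qm mi] ->] := greedy_start_witness Qi.
rewrite [X in (_ <= X)%N]/greedy_start; apply: (bigop.bigmax_sup m).
  by rewrite Qm (leq_trans mi (ltnW ij)).
by rewrite (load_split mi (ltnW ij)) -!addnA !leq_add2l load_ge ?leqnn.
Qed.

Lemma load_le_gap (S : 'I_n -> rat) :
    (forall m l, Q m -> Q l -> (m < l)%N -> S m + (p m)%:R <= S l) ->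
  forall m j, Q m -> Q j -> (m <= j)%N -> S m + (load Q m j)%:R <= S j.
Proof.
move=> ordered m j Qm Qj mj; move: {2}(j - m)%N (leqnn (j - m)) => d.
elim: d m j Qm Qj mj => [|d IH] m j Qm Qj mj dist;
  have [->|ne] := eqVneq m j; rewrite ?load_nil ?addr0 //.
- by exfalso; move/eqP: ne; apply; apply: val_inj => /=; lia.
have {}mj : (m < j)%N by rewrite ltn_neqAle mj andbT.
have [l /andP[Ql /andP[ml lj]] | none] := pickP (fun l : 'I_n => Q l && (m < l < j)%N).
  rewrite (load_split (ltnW ml) (ltnW lj)) natrD.
  have := IH m l Qm Ql (ltnW ml) ltac:(lia); have := IH l j Ql Qj (ltnW lj) ltac:(lia).
  lra.
by rewrite load_one //; apply: ordered.
Qed.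

Lemma greedy_start_le (S : 'I_n -> rat) j : Q j ->
    (forall m, Q m -> (r m)%:R <= S m) ->
    (forall m l, Q m -> Q l -> (m < l)%N -> S m + (p m)%:R <= S l) ->
  (greedy_start r Q j)%:R <= S j.
Proof.
move=> Qj release ordered; have [m /andP[Qm mj] ->] := greedy_start_witness Qj.
have := load_le_gap ordered Qm Qj mj; have := release m Qm; rewrite natrD; lra.
Qed.

End GreedyStart.

(** * Canonical schedules *)

Definition half (m : nat) : rat := m%:R / 2.

Lemma halfS m : half m.+1 = half m + 1 / 2.
Proof. by rewrite /half -natr1 mulrDl. Qed.

Lemma half_split (a b m : nat) : a%:R - b%:R <= half m \/ half m.+1 <= a%:R - b%:R.
Proof.
rewrite /half; case: (leqP (2 * b + m.+1) (2 * a)) => [h|]; [right | rewrite addnS ltnS => h; left];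
  by move: h; rewrite -(ler_nat rat) !natrD; lra.
Qed.

Lemma ler_add_truncn (a b : nat) (u : rat) : 0 <= u ->
  a%:R <= b%:R + u -> a%:R <= b%:R + (Num.truncn u)%:R :> rat.
Proof.
move=> u_ge0 h; rewrite -natrD ler_nat; case: (leqP a b) => [ab|ba].
  exact: leq_trans ab (leq_addr _ _).
by rewrite -leq_subLR truncn_ge_nat // natrB 1?ltnW //; lra.
Qed.

Definition same_part (E : {set 'I_n}) (j : 'I_n) : pred 'I_n :=
  fun m => (m \in E) == (j \in E).

Definition part_start (E : {set 'I_n}) (j : 'I_n) : nat := if j \in E then 0 else T2.

Definition avail_start E j := greedy_start (part_start E) (same_part E j) j.

Definition dev_start E j := greedy_start (S_orig p) (same_part E j) j.

Definition canon E (t : rat) (j : 'I_n) : rat :=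
  Num.max (avail_start E j)%:R ((dev_start E j)%:R - t).

Section Canonical.
Variable E : {set 'I_n}.

Lemma same_part_refl j : same_part E j j.
Proof. exact: eqxx. Qed.

Lemma same_partE (i j : 'I_n) : same_part E j i -> same_part E i = same_part E j.
Proof. by move/eqP=> Eij; rewrite /same_part Eij. Qed.

Lemma canon_ge_avail t j : (avail_start E j)%:R <= canon E t j.
Proof. by rewrite le_max lexx. Qed.

Lemma canon_ge_dev t j : (dev_start E j)%:R - t <= canon E t j.
Proof. by rewrite le_max lexx orbT. Qed.

Lemma canon_le t j x :
  (avail_start E j)%:R <= x -> (dev_start E j)%:R - t <= x -> canon E t j <= x.
Proof. by move=> ax dx; rewrite ge_max ax dx. Qed.

Lemma canon_leE t j x : (Cmp (canon E t) j <= x) =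
  ((avail_start E j + p j)%:R <= x) && ((dev_start E j + p j)%:R <= x + t).
Proof.
rewrite /Cmp -lerBrDr ge_max !natrD.
by apply/andP/andP => -[? ?]; split; lra.
Qed.

Lemma canon_ge_part_start t j : (part_start E j)%:R <= canon E t j.
Proof.
by apply: le_trans (canon_ge_avail t j); rewrite ler_nat; apply: greedy_start_ge (same_part_refl j).
Qed.

Lemma canon_ge_orig t j : (S_orig p j)%:R - t <= canon E t j.
Proof.
apply: le_trans (canon_ge_dev t j); rewrite lerD2r ler_nat.
exact: greedy_start_ge (same_part_refl j).
Qed.

Lemma canon_mono t (i j : 'I_n) : (i < j)%N -> same_part E j i ->
  Cmp (canon E t) i <= canon E t j.
Proof.
move=> ij Pji; rewrite /Cmp -lerBrDr; apply: canon_le.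
  have := canon_ge_avail t j; have := greedy_start_mono (part_start E) ij Pji.
  by rewrite -(ler_nat rat) natrD /avail_start (same_partE Pji); lra.
have := canon_ge_dev t j; have := greedy_start_mono (S_orig p) ij Pji.
by rewrite -(ler_nat rat) natrD /dev_start (same_partE Pji); lra.
Qed.

Lemma canon_late t j : j \notin E -> T2%:R <= canon E t j.
Proof. by move=> jE; have := canon_ge_part_start t j; rewrite /part_start (negbTE jE). Qed.

Definition canon_ok t : bool :=
  [&& 0 <= t, t <= k%:R, [forall j in E, Cmp (canon E t) j <= T1%:R]
    & [forall j, Cmp (canon E t) j <= (C_orig p j)%:R + t]].

Definition canon_bound t : rat := mu * t + \sum_(j < n) (w j)%:R * Cmp (canon E t) j.

Lemma canon_feasible t : canon_ok t ->
  feasible (canon E t) /\ cost (canon E t) <= canon_bound t.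
Proof.
case/and4P=> t_ge0 t_le_k /forall_inP early_ok /forallP dev_ok.
have Dt : Dmax (canon E t) <= t.
  by apply: Dmax_le t_ge0 _ => j; rewrite Delta_le dev_ok canon_ge_orig.
split; last by rewrite /cost /canon_bound lerD2r ler_wpM2l.
split; last exact: le_trans Dt t_le_k.
have T12 := ltW T1_ltr_T2.
split; [|split].
- by move=> j; apply: le_trans (canon_ge_part_start t j).
- move=> a b; wlog ab : a b / (a < b)%N => [W|_].
    case: (ltngtP a b) => [|ba|/val_inj->]; [exact: W | | by rewrite eqxx].
    by rewrite eq_sym => ne; case: (W b a ba ne); [right|left].
  have [Pba|] := boolP (same_part E b a); first by left; apply: canon_mono.
  rewrite /same_part; case aE: (a \in E); case bE: (b \in E) => //= _.
    by left; apply: le_trans (early_ok a aE) (le_trans T12 (canon_late t (negbT bE))).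
  by right; apply: le_trans (early_ok b bE) (le_trans T12 (canon_late t (negbT aE))).
- move=> j; case jE: (j \in E); first by left; apply: early_ok.
  by right; apply: canon_late; rewrite jE.
Qed.

Lemma canon_index_ordered t : canon_ok t ->
  index_ordered (in_earlier p T1 (canon E t)) (canon E t) /\
  index_ordered (in_later p T2 (canon E t)) (canon E t).
Proof.
case/and4P=> _ _ /forall_inP early_ok _; have T12 := T1_ltr_T2.
have ordered i j : (i \in E) = (j \in E) -> (i < j)%N -> canon E t i < canon E t j.
  move=> Eij ij; have := canon_mono t ij; rewrite /same_part Eij eqxx /Cmp => /(_ isT).
  by have := p_pos i; lra.
split=> i j ei ej; apply: ordered.
  have inE' x : in_earlier p T1 (canon E t) x -> x \in E.
    move=> ex; apply: contraLR ex => xE; have := canon_late t xE; have := p_pos x.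
    by rewrite /in_earlier /Cmp -ltNge; lra.
  by rewrite !inE'.
have notE x : in_later p T2 (canon E t) x -> x \notin E.
  by move=> lx; apply/negP => /early_ok; move: lx; rewrite /in_later; lra.
by rewrite (negbTE (notE _ ei)) (negbTE (notE _ ej)).
Qed.

Lemma canon_ok_le t t' : canon_ok t -> t <= t' <= k%:R -> canon_ok t'.
Proof.
case/and4P=> t_ge0 _ /forall_inP early_ok /forallP dev_ok /andP[tt' t'k].
apply/and4P; split; [lra | done | apply/forall_inP => j jE | apply/forallP => j].
  by move: (early_ok j jE); rewrite !canon_leE => /andP[? ?]; apply/andP; split; lra.
by move: (dev_ok j); rewrite !canon_leE => /andP[? ?]; apply/andP; split; lra.
Qed.

Lemma canon_ok_floor t : canon_ok t -> canon_ok (half (Num.truncn (2 * t))).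
Proof.
case/and4P=> t_ge0 t_le_k /forall_inP early_ok /forallP dev_ok.
set m := Num.truncn (2 * t); set lo := half m.
have /andP[m_le _] : m%:R <= 2 * t < m.+1%:R by apply: truncn_itv; lra.
have lo_ge0 : 0 <= lo by rewrite /lo /half; have := ler0n rat m; lra.
have round2 a b : a%:R <= b%:R + 2 * t -> a%:R <= b%:R + 2 * lo.
  by move=> h; have := ler_add_truncn (_ : 0 <= 2 * t) h; rewrite /lo /half; lra.
have round a b : a%:R <= b%:R + t -> a%:R <= b%:R + lo.
  move=> h; have := @round2 (2 * a) (2 * b); rewrite !natrM; lra.
apply/and4P; split; [done | rewrite /lo /half; lra | apply/forall_inP => j jE | apply/forallP => j].
  by move: (early_ok j jE); rewrite !canon_leE => /andP[-> /round].
move: (dev_ok j); rewrite !canon_leE => /andP[/round -> h] /=.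
by have := @round2 (dev_start E j + p j) (C_orig p j); lra.
Qed.

Lemma canon_affine m x j : half m <= x <= half m.+1 ->
  canon E x j = if half m.+1 <= (dev_start E j)%:R - (avail_start E j)%:R
                then (dev_start E j)%:R - x else (avail_start E j)%:R.
Proof.
move=> /andP[lo_x x_hi]; rewrite /canon.
case: (half_split (dev_start E j) (avail_start E j) m) => h.
  by rewrite ifF; [apply/max_idPl; lra | apply/negbTE; rewrite -ltNge; have := halfS m; lra].
by rewrite h; apply/max_idPr; lra.
Qed.

Lemma canon_bound_affine m : exists c, forall x, half m <= x <= half m.+1 ->
  canon_bound x = canon_bound (half m) + c * (x - half m).
Proof.
pose slope j := half m.+1 <= (dev_start E j)%:R - (avail_start E j)%:R.
exists (mu - \sum_(j < n | slope j) (w j)%:R) => x x_in.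
have lo_in : half m <= half m <= half m.+1 by rewrite lexx halfS; have := halfS m; lra.
suff : \sum_(j < n) (w j)%:R * Cmp (canon E x) j - \sum_(j < n) (w j)%:R * Cmp (canon E (half m)) j
       = (\sum_(j < n | slope j) (w j)%:R) * (half m - x) by rewrite /canon_bound; lra.
rewrite -sumrB [X in _ = X * _]big_mkcond mulr_suml; apply: eq_bigr => j _ /=.
by rewrite /Cmp (canon_affine j x_in) (canon_affine j lo_in) -/(slope j); case: ifP => _; ring.
Qed.

Lemma canon_ok_round t : canon_ok t ->
  exists2 m, (m <= 2 * k)%N & canon_ok (half m) && (canon_bound (half m) <= canon_bound t).
Proof.
move=> ok; have /and4P[t_ge0 t_le_k _ _] := ok.
have lo_ok := canon_ok_floor ok; set m := Num.truncn (2 * t) in lo_ok.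
have /andP[m_le m_gt] : m%:R <= 2 * t < m.+1%:R by apply: truncn_itv; lra.
have [t_lo|t_ne] := eqVneq t (half m).
  exists m; last by rewrite lo_ok -t_lo lexx.
  by rewrite -(ler_nat rat) natrM; rewrite /half in t_lo; lra.
have lo_t : half m < t by rewrite lt_neqAle eq_sym t_ne /half; lra.
have t_hi : t <= half m.+1 by rewrite /half; lra.
have m_lt : (m < 2 * k)%N by rewrite -(ltr_nat rat) natrM; rewrite /half in lo_t; lra.
have [c affine] := canon_bound_affine m.
have := affine t; rewrite (ltW lo_t) t_hi => /(_ isT) bound_t.
have [c_ge0|c_lt0] := leP 0 c.
  exists m; first exact: ltnW.
  by rewrite lo_ok /= bound_t lerDl mulr_ge0 // subr_ge0 ltW.
exists m.+1 => //; apply/andP; split.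
  apply: canon_ok_le ok _; rewrite t_hi /=.
  by move: m_lt; rewrite -(ler_nat rat) natrM /half; lra.
rewrite bound_t affine; last by rewrite lexx halfS andbT; have := halfS m; lra.
have : c * (half m.+1 - t) <= 0 by apply: mulr_le0_ge0; [exact: ltW | rewrite subr_ge0].
lra.
Qed.

End Canonical.

Lemma canon_below S t : valid S -> inversions S = set0 ->
    (forall j, (S_orig p j)%:R - t <= S j) ->
  forall j, canon [set x | early S x] t j <= S j.
Proof.
move=> VS no_inv release j; set E := [set x | early S x].
have partE m : same_part E j m = (early S m == early S j) by rewrite /same_part !inE.
have ordered m l : same_part E j m -> same_part E j l -> (m < l)%N -> S m + (p m)%:R <= S l.
  by rewrite !partE => /eqP Em /eqP El ml; apply: inversion_free_ordered; rewrite ?Em ?El.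
apply: canon_le.
  apply: greedy_start_le (same_part_refl E j) _ ordered => m.
  rewrite partE /part_start inE => /eqP Emj; case: ifP => Em; first by have [S_ge0 _] := VS.
  by apply: late_start; rewrite ?Em.
suff : (dev_start E j)%:R <= S j + t by lra.
apply: (@greedy_start_le _ _ (fun m => S m + t) _ (same_part_refl E j)) => [m _|m l Pm Pl ml].
  by have := release m; lra.
by have := ordered m l Pm Pl ml; lra.
Qed.

Lemma canon_ok_inversion_free S : feasible S -> inversions S = set0 ->
  canon_ok [set x | early S x] (Dmax S) /\
  canon_bound [set x | early S x] (Dmax S) <= cost S.
Proof.
move=> [VS Dk] no_inv.
have Delta_j j : (S_orig p j)%:R - Dmax S <= S j /\ Cmp S j <= (C_orig p j)%:R + Dmax S.
  by apply/andP; rewrite -Delta_le Delta_le_Dmax.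
have below := canon_below VS no_inv (fun j => (Delta_j j).1).
split.
  apply/and4P; split; [exact: Dmax_ge0 | exact: Dk | apply/forall_inP | apply/forallP] => j.
    by rewrite inE /early /Cmp => Ej; have := below j; lra.
  by have [_] := Delta_j j; rewrite /Cmp; have := below j; lra.
rewrite /cost /canon_bound lerD2l; apply: ler_sum => j _.
by apply: ler_wpM2l; rewrite ?ler0n // lerD2r below.
Qed.

Lemma canon_dominates S : feasible S -> exists E, exists2 m,
  (m <= 2 * k)%N & canon_ok E (half m) && (cost (canon E (half m)) <= cost S).
Proof.
move=> FS; have [S1 [FS1 cost1 no_inv]] := exists_inversion_free FS.
have [ok1 bound1] := canon_ok_inversion_free FS1 no_inv.
have [m m_le /andP[ok_m bound_m]] := canon_ok_round ok1.
exists [set x | early S1 x], m; rewrite // ok_m /=.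
have [_ cost_m] := canon_feasible ok_m.
by apply: le_trans cost_m (le_trans bound_m (le_trans bound1 cost1)).
Qed.

Lemma exists_optimal_canon : (exists S, feasible S) ->
  exists E t, canon_ok E t /\ forall S, feasible S -> cost (canon E t) <= cost S.
Proof.
move=> [S0 /canon_dominates[E0 [m0 m0_le /andP[ok0 _]]]].
have ord m : (m <= 2 * k)%N -> (m < (2 * k).+1)%N by rewrite ltnS.
pose sched (x : {set 'I_n} * 'I_(2 * k).+1) := canon x.1 (half x.2).
pose cand (x : {set 'I_n} * 'I_(2 * k).+1) := canon_ok x.1 (half x.2).
have cand0 : cand (E0, Ordinal (ord _ m0_le)) by [].
case: (arg_minP (fun x => cost (sched x)) cand0) => -[E m] /= ok min.
exists E, (half m); split=> // S /canon_dominates[E' [m' m'_le /andP[ok' cost']]].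
exact: le_trans (min (E', Ordinal (ord _ m'_le)) ok') cost'.
Qed.

End Rescheduling.

Theorem lemma1 (n : nat) (p w : 'I_n -> nat) (T1 T2 k : nat) (mu : rat)
  (hp : forall j, (0 < p j)%N) (hw : forall j, (0 < w j)%N)
  (hwspt : forall i j : 'I_n, (i < j)%N -> (p i * w j <= p j * w i)%N)
  (hT : (T1 < T2)%N) (hmu : 0 <= mu)
  (j1 : 'I_n) (hj1 : (T1 < C_orig p j1)%N)
  (hj1min : forall j : 'I_n, (T1 < C_orig p j)%N -> (j1 <= j)%N)
  (hpmin : (pmin p <= T1)%N) (hP : (T1 < Ptot p)%N)
  (hk : (T2 - S_orig p j1 <= k)%N)
  (hfeas : exists S, feasible p T1 T2 k S) :
  exists Sopt : 'I_n -> rat,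
    optimal p w T1 T2 k mu Sopt /\
    index_ordered (in_earlier p T1 Sopt) Sopt /\
    index_ordered (in_later p T2 Sopt) Sopt.
Proof.
have [E [t [ok opt]]] := exists_optimal_canon hp hwspt hT hmu hfeas.
have [feas _] := canon_feasible w hT hmu ok.
by exists (canon p T2 E t); split; [split | exact: (canon_index_ordered hp hT hmu ok)].
Qed.
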